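(* Let $A\in\Bbbk^{\theta\times\theta}$ be such that $\mathfrak{g}(A)$ is finite dimensional. Then $(\operatorname{ad}e_i)^p=(\operatorname{ad}f_i)^p=0$ on $\mathfrak{g}(A)$ for all $i\in\{1,\dots,\theta\}$.
   Context: $\Bbbk$ algebraically closed of characteristic $p>0$; $A=(a_{jk})$ with $a_{jj}\in\{0,2\}$ and $a_{jk}=0$ iff $a_{kj}=0$ for $j\ne k$. $\mathfrak{g}(A)$ is the contragredient Lie algebra: fix $\mathfrak{h}$ of dimension $2\theta-\operatorname{rank}A$, linearly independent $\xi_1,\dots,\xi_\theta\in\mathfrak{h}^*$, $h_1,\dots,h_\theta\in\mathfrak{h}$ with $\xi_k(h_j)=a_{jk}$; $\mathfrak{g}(A)$ is the Lie algebra generated by $\mathfrak{h}$ and $e_j,f_j$ ($1\le j\le\theta$) with relations $[h,h']=0$, $[h,e_j]=\xi_j(h)e_j$, $[h,f_j]=-\xi_j(h)f_j$, $[e_j,f_k]=\delta_{jk}h_j$, divided by the largest ideal which is graded (for $\deg e_j=1$, $\deg f_j=-1$, $\deg\mathfrak{h}=0$) and meets $\mathfrak{h}$ trivially. *)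

From HB Require Import structures.
From mathcomp Require Import all_boot all_order all_algebra.
Set Implicit Arguments. Unset Strict Implicit. Unset Printing Implicit Defensive.
Import GRing.Theory.
Local Open Scope ring_scope.

Section Contragredient.
Variables (K : fieldType) (L : vectType K) (br : L -> L -> L).

Definition lie_bracket : Prop :=
  [/\ (forall a x y z, br (a *: x + y) z = a *: br x z + br y z),
      (forall a x y z, br x (a *: y + z) = a *: br x y + br x z),
      (forall x, br x x = 0) &
      (forall x y z, br x (br y z) + br y (br z x) + br z (br x y) = 0)].

Definition lie_closed (S : {vspace L}) : Prop :=
  forall x y, x \in S -> y \in S -> br x y \in S.

Definition lie_ideal (S : {vspace L}) : Prop :=
  forall x y, y \in S -> br x y \in S.

Definition direct_grading (G : int -> {vspace L}) : Prop :=
  (forall x, exists (s : seq int) (y : int -> L),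
      [/\ uniq s, (forall n, y n \in G n) & x = \sum_(n <- s) y n]) /\
  (forall (s : seq int) (y : int -> L), uniq s -> (forall n, y n \in G n) ->
      \sum_(n <- s) y n = 0 -> forall n, n \in s -> y n = 0).

Definition graded_subspace (G : int -> {vspace L}) (I : {vspace L}) : Prop :=
  forall x, x \in I -> exists (s : seq int) (y : int -> L),
      [/\ uniq s, (forall n, y n \in (I :&: G n)%VS) & x = \sum_(n <- s) y n].

(* (L, br) is the contragredient Lie algebra g(A), with Cartan subalgebra h,
   functionals xi_k on h, coroots hv_j, generators e_j, f_j and grading G
   (deg e_j = 1, deg f_j = -1, deg h = 0). *)
Record is_contragredient (theta : nat) (A : 'M[K]_theta) (h : {vspace L})
    (xi : 'I_theta -> L -> K) (hv e f : 'I_theta -> L)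
    (G : int -> {vspace L}) : Prop := {
  cg_lie : lie_bracket;
  cg_dimh : \dim h = (2 * theta - \rank A)%N;
  cg_xi_lin : forall k a x y, x \in h -> y \in h ->
      xi k (a *: x + y) = a * xi k x + xi k y;
  cg_xi_free : forall c : 'I_theta -> K,
      (forall x, x \in h -> \sum_k c k * xi k x = 0) -> forall k, c k = 0;
  cg_hv_in : forall j, hv j \in h;
  cg_xi_hv : forall j k, xi k (hv j) = A j k;
  cg_hh : forall x y, x \in h -> y \in h -> br x y = 0;
  cg_he : forall x j, x \in h -> br x (e j) = xi j x *: e j;
  cg_hf : forall x j, x \in h -> br x (f j) = - (xi j x *: f j);
  cg_ef : forall j k, br (e j) (f k) = if j == k then hv j else 0;
  cg_gen : forall S : {vspace L}, (h <= S)%VS -> (forall j, e j \in S) ->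
      (forall j, f j \in S) -> lie_closed S -> S = fullv;
  cg_grading : direct_grading G;
  cg_Gbr : forall m n x y, x \in G m -> y \in G n -> br x y \in G (m + n)%R;
  cg_e_deg : forall j, e j \in G (1%R : int);
  cg_f_deg : forall j, f j \in G ((-1)%R : int);
  cg_h_deg : (h <= G (0%R : int))%VS;
  cg_max : forall I : {vspace L}, lie_ideal I -> graded_subspace G I ->
      (I :&: h = 0)%VS -> I = 0%VS
}.

End Contragredient.

From HB Require Import structures.
From mathcomp Require Import all_boot all_order all_algebra.
From mathcomp Require Import zify.
From Stdlib Require Import Classical.
Set Implicit Arguments. Unset Strict Implicit. Unset Printing Implicit Defensive.
Import GRing.Theory.
Local Open Scope ring_scope.

(* Let D := (ad e_i)^p. In characteristic p the Leibniz rule makes D a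
   derivation, so D vanishes as soon as it kills the generators h, e_j, f_j.
   On h and on the f_j this is a direct computation (for p = 2 it uses
   A_ii \in {0, 2}). The element y := D e_j lies in degree p + 1, is an
   h-weight vector and is killed by every ad f_k; hence the iterated
   ad e-brackets of y span a graded ideal concentrated in positive degrees.
   It meets h trivially, so it is zero by maximality, and y = 0. The case of
   f_i follows by the involution exchanging e and f, negating h, the xi_k
   and the grading. *)

Section VspaceFacts.
Variables (K : fieldType) (L : vectType K).

Lemma ltn_dimv_addl (U V : {vspace L}) :
  ~~ (V <= U)%VS -> (\dim U < \dim (U + V))%N.
Proof. by move=> nVU; rewrite (ltn_leqif (dimv_leqif_sup (addvSl U V))) subv_add subvv. Qed.

Lemma vspace_of_linear_pred (P : L -> Prop) : P 0 ->
    (forall a u v, P u -> P v -> P (a *: u + v)) ->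
  exists S : {vspace L}, forall x, x \in S <-> P x.
Proof.
move=> P0 Plin.
suff: forall S : {vspace L}, (forall x, x \in S -> P x) ->
    exists S' : {vspace L}, forall x, x \in S' <-> P x.
  by move=> /(_ 0%VS); apply=> x; rewrite memv0 => /eqP ->.
move=> S; have [n] := ubnP (\dim {:L} - \dim S); elim: n S => // n IHn S codimS SP.
case: (classic (forall x, P x -> x \in S)) => [PS | /not_all_ex_not [x]].
  by exists S => x; split; auto.
move=> Hx; have [Px xNS] := imply_to_and _ _ Hx.
apply: (IHn (S + <[x]>)%VS).
  have : (\dim S < \dim (S + <[x]>))%N by apply: ltn_dimv_addl; rewrite -memvE; apply/negP.
  have : (\dim (S + <[x]>) <= \dim {:L})%N by apply/dimvS/subvf.
  lia.
move=> _ /memv_addP [u uS [_ /vlineP [a ->] ->]].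
by rewrite addrC; apply: Plin => //; apply: SP.
Qed.

Lemma linear_pred_span (P : L -> Prop) (X : seq L) : P 0 ->
    (forall a u v, P u -> P v -> P (a *: u + v)) ->
  (forall x, x \in X -> P x) -> forall v, v \in <<X>>%VS -> P v.
Proof.
move=> P0 Plin PX; have [S HS] := vspace_of_linear_pred P0 Plin.
have /subvP XS : (<<X>> <= S)%VS by apply/span_subvP => x /PX /HS.
by move=> v /XS /HS.
Qed.

Lemma linear_pred_vbasis (P : L -> Prop) (U : {vspace L}) : P 0 ->
    (forall a u v, P u -> P v -> P (a *: u + v)) ->
  (forall x, x \in vbasis U -> P x) -> forall v, v \in U -> P v.
Proof. by move=> P0 Plin PX v; rewrite -(span_basis (vbasisP U)); apply: linear_pred_span. Qed.

Lemma exists_sumv_absorbs (W : nat -> {vspace L}) :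
  exists N, (W N <= \sum_(m < N) W m)%VS.
Proof.
pose V n := (\sum_(m < n) W m)%VS; pose n := (\dim {:L}).+1.
have [/existsP [m Wm] | none] := boolP [exists m : 'I_n, (W m <= V m)%VS]; first by exists m.
suff: (n <= \dim (V n))%N by rewrite leqNgt ltnS dimvS ?subvf.
have VS m : V m.+1 = (V m + W m)%VS by rewrite /V big_ord_recr.
elim: {-2}n (leqnn n) => // m IHm lt_m_n; rewrite VS.
apply: leq_ltn_trans (IHm (ltnW lt_m_n)) (ltn_dimv_addl _).
by apply: contra none => WV; apply/existsP; exists (Ordinal lt_m_n).
Qed.

End VspaceFacts.

Section HomogeneousSum.
Variables (K : fieldType) (L : vectType K) (G : int -> {vspace L}).
Variables (N : nat) (W : nat -> {vspace L}) (d : nat -> int).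
Hypotheses (d_inj : injective d) (WG : forall m, (W m <= G (d m))%VS).

Let I := (\sum_(m < N) W m)%VS.
Let degs := [seq d m | m <- index_iota 0 N].

Lemma sumv_homogeneous_decomp z : z \in I ->
  exists y : int -> L, (forall k, y k \in (I :&: G k)%VS) /\ z = \sum_(k <- degs) y k.
Proof.
move=> /memv_sumP [w Ww ->]; exists (fun k => \sum_(m < N | d m == k) w m); split.
  move=> k; rewrite memv_cap; apply/andP; split; apply: memv_suml => m /eqP dm.
    by apply: (subvP (sumv_sup m _ (subvv _))); last apply: Ww.
  by rewrite -dm; apply: (subvP (WG m)); apply: Ww.
rewrite big_map big_mkord; apply: eq_bigr => m _.
by rewrite (big_pred1 m) // => m'; rewrite /= inj_eq.
Qed.

Lemma graded_sumv_homogeneous : graded_subspace G I.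
Proof.
move=> z /sumv_homogeneous_decomp [y [yIG ->]]; exists degs, y; split => //.
by rewrite map_inj_uniq ?iota_uniq.
Qed.

Lemma sumv_homogeneous_capv n : direct_grading G -> (forall m, d m != n) ->
  (I :&: G n = 0)%VS.
Proof.
move=> [_ Gdirect] dNn; apply/eqP; rewrite -subv0; apply/subvP => z.
rewrite memv_cap memv0 => /andP [/sumv_homogeneous_decomp [y [yIG Ez]] zGn].
have nNdegs : n \notin degs by apply/mapP => [[m _ /eqP]]; rewrite eq_sym (negPf (dNn m)).
pose y' k := if k == n then - z else y k.
have y'G k : y' k \in G k.
  rewrite /y'; case: eqP => [-> | _]; first by rewrite memvN.
  by have := yIG k; rewrite memv_cap => /andP [].
have y'sum : \sum_(k <- n :: degs) y' k = 0.
  rewrite big_cons /y' eqxx (eq_big_seq y) -?Ez ?addNr // => k kdegs.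
  by rewrite ifN //; apply: contraNneq nNdegs => <-.
have uniq_degs : uniq (n :: degs) by rewrite /= nNdegs map_inj_uniq ?iota_uniq.
have := Gdirect _ _ uniq_degs y'G y'sum n (mem_head _ _).
by rewrite /y' eqxx => /eqP; rewrite oppr_eq0.
Qed.

End HomogeneousSum.

Section LieBracket.
Variables (K : fieldType) (L : vectType K) (br : L -> L -> L).
Hypothesis Hbr : lie_bracket br.

Lemma br0l z : br 0 z = 0.
Proof.
case: Hbr => brl _ _ _; have := brl 1 0 0 z; rewrite !scale1r addr0 => brl0.
by apply: (@addrI _ (br 0 z)); rewrite addr0 -brl0.
Qed.

Lemma br0r z : br z 0 = 0.
Proof.
case: Hbr => _ brr _ _; have := brr 1 z 0 0; rewrite !scale1r addr0 => brr0.
by apply: (@addrI _ (br z 0)); rewrite addr0 -brr0.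
Qed.

Lemma brDl x y z : br (x + y) z = br x z + br y z.
Proof. by case: Hbr => brl _ _ _; rewrite -[x]scale1r brl !scale1r. Qed.

Lemma brDr x y z : br z (x + y) = br z x + br z y.
Proof. by case: Hbr => _ brr _ _; rewrite -[x]scale1r brr !scale1r. Qed.

Lemma brZl a x z : br (a *: x) z = a *: br x z.
Proof. by case: Hbr => brl _ _ _; rewrite -[_ *: x]addr0 brl br0l addr0. Qed.

Lemma brZr a x z : br z (a *: x) = a *: br z x.
Proof. by case: Hbr => _ brr _ _; rewrite -[_ *: x]addr0 brr br0r addr0. Qed.

Lemma brNr x z : br z (- x) = - br z x.
Proof. by rewrite -scaleN1r brZr scaleN1r. Qed.

Lemma brsumr I (r : seq I) (P : pred I) (F : I -> L) z :
  br z (\sum_(i <- r | P i) F i) = \sum_(i <- r | P i) br z (F i).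
Proof. exact: (big_morph (br z) (fun x y => brDr x y z) (br0r z)). Qed.

Lemma brC x y : br x y = - br y x.
Proof.
case: Hbr => _ _ brxx _; apply/eqP; rewrite -addr_eq0.
by have := brxx (x + y); rewrite brDl !brDr !brxx add0r addr0 => ->.
Qed.

Lemma br_jacobi x y z : br x (br y z) = br (br x y) z + br y (br x z).
Proof.
case: Hbr => _ _ _ jacobi; move/eqP: (jacobi x y z); rewrite -addrA addr_eq0 => /eqP ->.
by rewrite (brC z x) (brC z (br x y)) brNr opprD !opprK addrC.
Qed.

Lemma iter_brZD n u a x y :
  iter n (br u) (a *: x + y) = a *: iter n (br u) x + iter n (br u) y.
Proof. by elim: n => //= n ->; rewrite brDr brZr. Qed.

Lemma iter_br0 n u : iter n (br u) 0 = 0.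
Proof. by elim: n => //= n ->; rewrite br0r. Qed.

Lemma iter_br_leibniz n u x y : iter n (br u) (br x y) =
  \sum_(k < n.+1) 'C(n, k)%:R *: br (iter k (br u) x) (iter (n - k) (br u) y).
Proof.
elim: n => [|n IHn]; first by rewrite big_ord1 /= scale1r.
rewrite [LHS]/= IHn brsumr.
under eq_bigr => k _ do rewrite brZr br_jacobi scalerDr.
rewrite big_split /= [in RHS]big_ord_recl /= bin0 scale1r.
under [in RHS]eq_bigr => k _ do rewrite /bump /= add1n binS natrD scalerDl subSS.
rewrite big_split /= [X in _ = _ + X]addrC [RHS]addrCA; congr (_ + _).
rewrite big_ord_recl /= bin0 scale1r subn0; congr (_ + _).
rewrite big_ord_recr /= bin_small // scale0r addr0.
by apply: eq_bigr => k _; rewrite -(subnSK (ltn_ord k)).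
Qed.

Lemma iter_br_pchar p u x y : p \in [pchar K] ->
  iter p (br u) (br x y) = br (iter p (br u) x) y + br x (iter p (br u) y).
Proof.
move=> pchar_p; have [p' def_p] : exists p', p = p'.+1.
  by case: p pchar_p => [/pcharf_prime | p' _] //; exists p'.
rewrite def_p iter_br_leibniz big_ord_recl big_ord_recr /= bin0 scale1r.
rewrite big1 ?add0r => [|k _]; first by rewrite subnn binn scale1r addrC.
by rewrite -def_p bin_lt_pcharf_0 ?scale0r // def_p /bump /= add1n ltnS ltn_ord.
Qed.

End LieBracket.

Section Contragredient.
Variables (K : fieldType) (theta : nat) (A : 'M[K]_theta) (L : vectType K).
Variables (br : L -> L -> L) (h : {vspace L}) (xi : 'I_theta -> L -> K).
Variables (hv e f : 'I_theta -> L) (G : int -> {vspace L}).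
Hypothesis HL : is_contragredient br A h xi hv e f G.

Let Hbr := cg_lie HL.

Lemma contragredient_ind (P : L -> Prop) : P 0 ->
    (forall a u v, P u -> P v -> P (a *: u + v)) ->
    (forall x, x \in h -> P x) -> (forall j, P (e j)) -> (forall j, P (f j)) ->
    (forall x y, P x -> P y -> P (br x y)) ->
  forall x, P x.
Proof.
move=> P0 Plin Ph Pe Pf Pbr; have [S HS] := vspace_of_linear_pred P0 Plin.
have SL : S = fullv.
  apply: (cg_gen HL) => [|j|j|].
  - by apply/subvP => x /Ph /HS.
  - exact/HS.
  - exact/HS.
  - by move=> x y /HS Px /HS Py; apply/HS/Pbr.
by move=> x; apply/HS; rewrite SL memvf.
Qed.

Lemma lie_ideal_gen (S : {vspace L}) :
    (forall x v, x \in h -> v \in S -> br x v \in S) ->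
    (forall j v, v \in S -> br (e j) v \in S) ->
    (forall j v, v \in S -> br (f j) v \in S) ->
  lie_ideal br S.
Proof.
move=> Sh Se Sf x; elim/contragredient_ind: x => [v _|a u w Su Sw v vS||||].
- by rewrite (br0l Hbr) mem0v.
- by rewrite (brDl Hbr) (brZl Hbr) memvD ?memvZ ?Su ?Sw.
- by move=> x xh v; apply: Sh.
- exact: Se.
- exact: Sf.
move=> x y Sx Sy v vS.
have -> : br (br x y) v = br x (br y v) - br y (br x v) by rewrite (br_jacobi Hbr) addrK.
by apply: memvB; [apply/Sx/Sy | apply/Sy/Sx].
Qed.

Lemma br_f_e_in_h j k : br (f j) (e k) \in h.
Proof.
rewrite (brC Hbr) (cg_ef HL) memvN.
by case: eqP => _; [apply: (cg_hv_in HL) | apply: mem0v].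
Qed.

Section LowestWeightVector.
Variables (n : nat) (y : L).
Hypotheses (yG : y \in G (Posz n.+1)) (yh : forall x, x \in h -> br x y \in <[y]>%VS).
Hypothesis yf : forall k, br (f k) y = 0.

Fixpoint layer m : {vspace L} :=
  if m is m'.+1 then <<[seq br (e k) b | k <- enum 'I_theta, b <- vbasis (layer m')]>>%VS
  else <[y]>%VS.

Lemma layer_e k m v : v \in layer m -> br (e k) v \in layer m.+1.
Proof.
move: v; apply: linear_pred_vbasis => [|a u w Hu Hw|b bW].
- by rewrite (br0r Hbr) mem0v.
- by rewrite (brDr Hbr) (brZr Hbr) memvD ?memvZ.
by apply: memv_span; apply/allpairsP; exists (k, b); rewrite mem_enum.
Qed.

Lemma layer_ind m (P : L -> Prop) : P 0 ->
    (forall a u v, P u -> P v -> P (a *: u + v)) ->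
    (forall k b, b \in layer m -> P (br (e k) b)) ->
  forall v, v \in layer m.+1 -> P v.
Proof.
move=> P0 Plin Pe; apply: linear_pred_span => // _ /allpairsP [[k b] [_ bW ->]].
exact/Pe/vbasis_mem.
Qed.

Lemma layer_h x m v : x \in h -> v \in layer m -> br x v \in layer m.
Proof.
move=> xh; elim: m v => [|m IHm]; first by move=> v /vlineP [c ->]; rewrite (brZr Hbr) memvZ ?yh.
apply: layer_ind => [|a u w Hu Hw|k b bW].
- by rewrite (br0r Hbr) mem0v.
- by rewrite (brDr Hbr) (brZr Hbr) memvD ?memvZ.
by rewrite (br_jacobi Hbr) (cg_he HL) // (brZl Hbr) memvD ?memvZ ?layer_e ?IHm.
Qed.

Lemma layer0_f k v : v \in layer 0 -> br (f k) v = 0.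
Proof. by move=> /vlineP [c ->]; rewrite (brZr Hbr) yf scaler0. Qed.

Lemma layer_f k m v : v \in layer m.+1 -> br (f k) v \in layer m.
Proof.
elim: m v => [|m IHm]; apply: layer_ind => [|a u w Hu Hw|l b bW].
- by rewrite (br0r Hbr) mem0v.
- by rewrite (brDr Hbr) (brZr Hbr) memvD ?memvZ.
- by rewrite (br_jacobi Hbr) (layer0_f k bW) (br0r Hbr) addr0 layer_h ?br_f_e_in_h.
- by rewrite (br0r Hbr) mem0v.
- by rewrite (brDr Hbr) (brZr Hbr) memvD ?memvZ.
rewrite (br_jacobi Hbr); apply: memvD; first exact: layer_h (br_f_e_in_h k l) bW.
exact/layer_e/IHm.
Qed.

Lemma layer_G m : (layer m <= G (Posz (n.+1 + m)))%VS.
Proof.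
apply/subvP; elim: m => [|m IHm]; first by move=> v /vlineP [c ->]; rewrite memvZ ?addn0.
apply: layer_ind => [|a u w Hu Hw|k b bW]; first exact: mem0v.
  by rewrite memvD ?memvZ.
rewrite addnS -add1n PoszD; exact: (cg_Gbr HL (cg_e_deg HL k) (IHm b bW)).
Qed.

Lemma lowest_weight_vector_eq0 : y = 0.
Proof.
have [N WN] := exists_sumv_absorbs layer; set I := (\sum_(m < N) layer m)%VS.
have layer_I m : (m <= N)%N -> (layer m <= I)%VS.
  by rewrite leq_eqVlt => /predU1P [-> // | ltmN]; apply: (sumv_sup (Ordinal ltmN)).
have I_stable (x : L) : (forall m v, (m < N)%N -> v \in layer m -> br x v \in I) ->
    forall v, v \in I -> br x v \in I.
  move=> Wx v /memv_sumP [w Ww ->]; rewrite (brsumr Hbr).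
  by apply: memv_suml => m _; apply: Wx (Ww m isT).
have I_ideal : lie_ideal br I.
  apply: lie_ideal_gen => [x v xh|j|j]; [move: v | |]; apply: I_stable => m v ltmN vW.
  - by apply: (subvP (layer_I m (ltnW ltmN))); apply: layer_h.
  - by apply: (subvP (layer_I m.+1 ltmN)); apply: layer_e.
  case: m ltmN vW => [|m] ltmN vW; first by rewrite (layer0_f j vW) mem0v.
  by apply: (subvP (layer_I m (ltnW (ltnW ltmN)))); apply: layer_f.
have d_inj : injective (fun m => Posz (n.+1 + m)) by move=> m m' [/addnI].
have I_graded : graded_subspace G I := graded_sumv_homogeneous d_inj layer_G.
have I_h : (I :&: h = 0)%VS.
  have IG0 := sumv_homogeneous_capv N d_inj layer_G (n := 0) (cg_grading HL) (fun m => isT).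
  by apply/eqP; rewrite -subv0 -IG0 capvS ?subvv ?(cg_h_deg HL).
have := cg_max HL I_ideal I_graded I_h => I0.
by apply/eqP; rewrite -memv0 -I0; apply: (subvP (layer_I 0 isT)); apply: memv_line.
Qed.

End LowestWeightVector.

Lemma iter_br_e_G i n m x : x \in G m -> iter n (br (e i)) x \in G (m + Posz n).
Proof.
elim: n => [|n IHn] xGm /=; first by rewrite addr0.
by rewrite -[n.+1]add1n PoszD addrCA; apply: (cg_Gbr HL (cg_e_deg HL i) (IHn xGm)).
Qed.

Section PowerAdE.
Variables (p : nat) (i : 'I_theta).
Hypotheses (pchar_p : p \in [pchar K]) (Aii : A i i = 0 \/ A i i = 2).

Local Notation D := (iter p (br (e i))).

Let p_gt1 : (1 < p)%N. Proof. exact/prime_gt1/(pcharf_prime pchar_p). Qed.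

Lemma br_e_h x : x \in h -> br (e i) x = - (xi i x *: e i).
Proof. by move=> xh; rewrite (brC Hbr) (cg_he HL). Qed.

Lemma br_e_e a : br (e i) (a *: e i) = 0.
Proof. by rewrite (brZr Hbr); case: Hbr => _ _ -> _; rewrite scaler0. Qed.

Lemma iter_br_e_h x : x \in h -> D x = 0.
Proof.
move=> xh; case: p p_gt1 => [|[|q]] // _.
by rewrite !iterSr (br_e_h xh) (brNr Hbr) br_e_e oppr0 (iter_br0 Hbr).
Qed.

(* For p = 2, D (f_i) = [e_i, h_i] = - A_ii e_i vanishes only because A_ii is 0 or 2. *)
Lemma iter_br_e_f j : D (f j) = 0.
Proof.
have [q def_p] : exists q, p = q.+2 by case: p p_gt1 => [|[|q]] // _; exists q.
rewrite def_p !iterSr (cg_ef HL); case: eqP => _; last by rewrite (br0r Hbr) (iter_br0 Hbr).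
rewrite (br_e_h (cg_hv_in HL i)) (cg_xi_hv HL).
case: q def_p => [|q] def_p; last by rewrite iterSr (brNr Hbr) br_e_e oppr0 (iter_br0 Hbr).
have two0 : 2%:R = 0 :> K by rewrite -def_p (pcharf0 pchar_p).
by case: Aii => ->; rewrite ?two0 scale0r oppr0.
Qed.

Lemma iter_br_e_e j : D (e j) = 0.
Proof.
apply: (lowest_weight_vector_eq0 (n := p)).
- by have := iter_br_e_G i p (cg_e_deg HL j); rewrite -PoszD add1n.
- move=> x xh; have := iter_br_pchar Hbr (e i) x (e j) pchar_p.
  rewrite (iter_br_e_h xh) (br0l Hbr) add0r (cg_he HL j xh) => <-.
  by rewrite -[_ *: e j]addr0 (iter_brZD Hbr) (iter_br0 Hbr) addr0 memvZ ?memv_line.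
move=> k; have := iter_br_pchar Hbr (e i) (f k) (e j) pchar_p.
by rewrite iter_br_e_f (br0l Hbr) add0r => <-; apply/iter_br_e_h/br_f_e_in_h.
Qed.

Lemma iter_br_e_eq0 x : D x = 0.
Proof.
elim/contragredient_ind: x => [|a u v Du Dv|x /iter_br_e_h|j|j|x y Dx Dy] //.
- exact: (iter_br0 Hbr).
- by rewrite (iter_brZD Hbr) Du Dv scaler0 addr0.
- exact: iter_br_e_e.
- exact: iter_br_e_f.
by rewrite (iter_br_pchar Hbr _ _ _ pchar_p) Dx Dy (br0l Hbr) (br0r Hbr) addr0.
Qed.

End PowerAdE.

End Contragredient.

Section ChevalleySwap.
Variables (K : fieldType) (L : vectType K) (G : int -> {vspace L}).

Let Gopp n := G (- n).

Lemma graded_subspace_opp (I : {vspace L}) : graded_subspace Gopp I -> graded_subspace G I.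
Proof.
move=> gradedI x /gradedI [s [y [s_uniq yIG ->]]].
exists [seq - n | n <- s], (fun n => y (- n)); split.
- by rewrite map_inj_uniq //; apply: oppr_inj.
- by move=> n; have := yIG (- n); rewrite /Gopp opprK.
by rewrite big_map; apply: eq_bigr => n _; rewrite opprK.
Qed.

Lemma direct_grading_opp : direct_grading G -> direct_grading Gopp.
Proof.
case=> [Gspan Gdirect]; split.
  move=> x; have [s [y [s_uniq yG ->]]] := Gspan x.
  exists [seq - n | n <- s], (fun n => y (- n)); split => //.
  - by rewrite map_inj_uniq //; apply: oppr_inj.
  by rewrite big_map; apply: eq_bigr => n _; rewrite opprK.
move=> s y s_uniq yG sum0 n ns.
have yG' m : y (- m) \in G m by have := yG (- m); rewrite /Gopp opprK.
have := Gdirect [seq - n | n <- s] (fun n => y (- n)).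
rewrite map_inj_uniq; last exact: oppr_inj.
rewrite big_map (eq_bigr y) => [|m _]; last by rewrite opprK.
by move=> /(_ s_uniq yG' sum0 (- n) (map_f _ ns)); rewrite opprK.
Qed.

Variables (theta : nat) (A : 'M[K]_theta) (br : L -> L -> L) (h : {vspace L}).
Variables (xi : 'I_theta -> L -> K) (hv e f : 'I_theta -> L).

Lemma is_contragredient_swap : is_contragredient br A h xi hv e f G ->
  is_contragredient br A h (fun k x => - xi k x) (fun j => - hv j) f e Gopp.
Proof.
move=> HL; have Hbr := cg_lie HL.
have xi0 k : xi k 0 = 0.
  have := cg_xi_lin HL k 1 (mem0v h) (mem0v h); rewrite scale1r addr0 mul1r => xi00.
  by apply: (@addrI _ (xi k 0)); rewrite addr0 -xi00.
have xiN k v : v \in h -> xi k (- v) = - xi k v.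
  by move=> vh; rewrite -[- v]addr0 -scaleN1r (cg_xi_lin HL) ?mem0v // xi0 addr0 mulN1r.
split.
- exact: Hbr.
- exact: (cg_dimh HL).
- by move=> k a x y xh yh; rewrite (cg_xi_lin HL) // opprD mulrN.
- move=> c Hc k; apply/oppr_inj; rewrite oppr0.
  apply: (cg_xi_free HL (c := fun m => - c m)) => x xh; rewrite -[RHS](Hc x xh).
  by apply: eq_bigr => m _; rewrite mulNr mulrN.
- by move=> j; rewrite memvN; apply: (cg_hv_in HL).
- by move=> j k; rewrite xiN ?(cg_hv_in HL) // opprK (cg_xi_hv HL).
- exact: (cg_hh HL).
- by move=> x j xh; rewrite (cg_hf HL) // scaleNr.
- by move=> x j xh; rewrite (cg_he HL) // scaleNr opprK.
- move=> j k; rewrite (brC Hbr) (cg_ef HL) eq_sym.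
  by case: eqP => [->|_]; rewrite ?oppr0.
- by move=> S hS fS eS; apply: (cg_gen HL).
- exact: direct_grading_opp (cg_grading HL).
- by move=> m n x y xm yn; rewrite /Gopp opprD; apply: (cg_Gbr HL).
- exact: (cg_f_deg HL).
- by move=> j; rewrite /Gopp opprK; apply: (cg_e_deg HL).
- by rewrite /Gopp oppr0; apply: (cg_h_deg HL).
by move=> I Iideal /graded_subspace_opp; apply: (cg_max HL).
Qed.

End ChevalleySwap.

Theorem lemma4p2 (K : closedFieldType) (p : nat) (hp : p \in [pchar K])
    (theta : nat) (A : 'M[K]_theta)
    (hA1 : forall j, A j j = 0 \/ A j j = 2)
    (hA2 : forall j k, j != k -> (A j k = 0 <-> A k j = 0))
    (L : vectType K) (br : L -> L -> L) (h : {vspace L})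
    (xi : 'I_theta -> L -> K) (hv e f : 'I_theta -> L)
    (G : int -> {vspace L})
    (HL : is_contragredient br A h xi hv e f G) :
  forall (i : 'I_theta) (x : L),
    iter p (br (e i)) x = 0 /\ iter p (br (f i)) x = 0.
Proof.
move=> i x; split; first exact: (iter_br_e_eq0 HL hp (hA1 i)).
exact: (iter_br_e_eq0 (is_contragredient_swap HL) hp (hA1 i)).
Qed.
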